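(* If a sequent $\Gamma\Rightarrow\Delta$ is provable in $\mathsf{Grz}_\infty$, then there is a cyclic proof of $\Gamma\Rightarrow\Delta$.
   Context: Formulas are built from $\bot$ and atomic propositions using $\to$ and $\Box$. A sequent is $\Gamma\Rightarrow\Delta$ with $\Gamma,\Delta$ finite multisets of formulas; $\Box\Pi$ denotes $\{\Box B: B\in\Pi\}$ as a multiset. The calculus $\mathsf{Grz}_\infty$ has initial sequents $\Gamma,p\Rightarrow p,\Delta$ ($p$ atomic) and $\Gamma,\bot\Rightarrow\Delta$ and rules: $(\to_L)$ from $\Gamma,B\Rightarrow\Delta$ and $\Gamma\Rightarrow A,\Delta$ infer $\Gamma,A\to B\Rightarrow\Delta$; $(\to_R)$ from $\Gamma,A\Rightarrow B,\Delta$ infer $\Gamma\Rightarrow A\to B,\Delta$; $(\mathsf{refl})$ from $\Gamma,B,\Box B\Rightarrow\Delta$ infer $\Gamma,\Box B\Rightarrow\Delta$; $(\Box)$ from left premise $\Gamma,\Box\Pi\Rightarrow A,\Delta$ and right premise $\Box\Pi\Rightarrow A$ infer $\Gamma,\Box\Pi\Rightarrow\Box A,\Delta$. An $\infty$-proof is a possibly infinite tree of sequents built according to these rules, with leaves labelled by initial sequents, in which every infinite branch passes through a right premise of $(\Box)$ infinitely often; a sequent is provable if it labels the root of an $\infty$-proof. A cyclic proof of $\Gamma\Rightarrow\Delta$ is a pair $(\kappa,d)$ where $\kappa$ is a finite tree of sequents constructed according to the rules of $\mathsf{Grz}_\infty$ with root labelled $\Gamma\Rightarrow\Delta$ (leaves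 need not be initial sequents), and $d$ is a function defined exactly on the leaves of $\kappa$ not labelled by initial sequents such that for each such leaf $a$: $d(a)$ lies on the path from the root of $\kappa$ to $a$; there is a right premise of the rule $(\Box)$ between $a$ and $d(a)$; and $a$ and $d(a)$ are labelled by the same sequent. *)

From Stdlib Require Import List Permutation Arith.
Import ListNotations.

Inductive fml : Type :=
| Bot : fml
| Atom : nat -> fml
| Imp : fml -> fml -> fml
| Box : fml -> fml.

(** A sequent Gamma => Delta; the lists are read as finite multisets. *)
Definition sequent : Type := (list fml * list fml)%type.

Definition seq_eqv (s s' : sequent) : Prop :=
  Permutation (fst s) (fst s') /\ Permutation (snd s) (snd s').

Definition initial (s : sequent) : Prop :=
  (exists p : nat, In (Atom p) (fst s) /\ In (Atom p) (snd s)) \/ In Bot (fst s).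

Inductive rule : Type := ImpL | ImpR | Refl | BoxR.

Definition nprem (r : option rule) : nat :=
  match r with
  | None => 0
  | Some ImpL => 2
  | Some ImpR => 1
  | Some Refl => 1
  | Some BoxR => 2
  end.

(** [rule_inst r c p] : the conclusion c and the premises p 0, p 1, ...
    form an instance of rule r (up to multiset equality).
    For (Box), premise 0 is the left premise and premise 1 the right one. *)
Definition rule_inst (r : rule) (c : sequent) (p : nat -> sequent) : Prop :=
  match r with
  | ImpL => exists G D A B,
      seq_eqv c (Imp A B :: G, D) /\ seq_eqv (p 0) (B :: G, D)
      /\ seq_eqv (p 1) (G, A :: D)
  | ImpR => exists G D A B,
      seq_eqv c (G, Imp A B :: D) /\ seq_eqv (p 0) (A :: G, B :: D)
  | Refl => exists G D B,
      seq_eqv c (Box B :: G, D) /\ seq_eqv (p 0) (B :: Box B :: G, D)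
  | BoxR => exists G D P A,
      seq_eqv c (G ++ map Box P, Box A :: D)
      /\ seq_eqv (p 0) (G ++ map Box P, A :: D)
      /\ seq_eqv (p 1) (map Box P, [A])
  end.

(** A (possibly infinite) labelled tree: nodes are addresses [list nat]
    (the i-th child of w is w ++ [i]); each node carries a sequent and the
    rule applied there (None for a leaf). *)
Record ptree : Type := {
  lab : list nat -> sequent;
  rl  : list nat -> option rule
}.

Inductive node (t : ptree) : list nat -> Prop :=
| node_root : node t []
| node_child : forall w i, node t w -> i < nprem (rl t w) -> node t (w ++ [i]).

Definition rprem (t : ptree) (v : list nat) : Prop :=
  exists w, v = w ++ [1] /\ rl t w = Some BoxR.

Definition rules_ok (t : ptree) (w : list nat) : Prop :=
  match rl t w with
  | None => True
  | Some r => rule_inst r (lab t w) (fun i => lab t (w ++ [i]))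
  end.

Definition branch_prefix (b : nat -> nat) (n : nat) : list nat := map b (seq 0 n).

Definition inf_proof (t : ptree) (s : sequent) : Prop :=
  seq_eqv (lab t []) s
  /\ (forall w, node t w -> rules_ok t w)
  /\ (forall w, node t w -> rl t w = None -> initial (lab t w))
  /\ (forall b : nat -> nat, (forall n, node t (branch_prefix b n)) ->
        forall n, exists m, n <= m /\ rprem t (branch_prefix b (S m))).

Definition provable (s : sequent) : Prop := exists t, inf_proof t s.

Definition prefix (u v : list nat) : Prop := exists x, v = u ++ x.

(** Cyclic proofs (t, d) of s: t is a finite tree; d assigns to each
    non-initial leaf a companion on its path with the same sequent and a
    right premise of (Box) strictly below the companion and at or above the leaf. *)
Definition cyclic_proof (t : ptree) (d : list nat -> list nat) (s : sequent) : Prop :=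
  seq_eqv (lab t []) s
  /\ (exists N, forall w, node t w -> length w <= N)
  /\ (forall w, node t w -> rules_ok t w)
  /\ (forall a, node t a -> rl t a = None -> ~ initial (lab t a) ->
        prefix (d a) a
        /\ (exists c, prefix (d a) c /\ c <> d a /\ prefix c a /\ rprem t c)
        /\ seq_eqv (lab t (d a)) (lab t a)).

Definition has_cyclic_proof (s : sequent) : Prop :=
  exists t d, cyclic_proof t d s.

From Stdlib Require Import List Permutation Arith Lia Classical ClassicalEpsilon FinFun.
From Stdlib Require Import Relation_Operators Lexicographic_Product.
Import ListNotations.

(* An infinite proof is sound for Grz-frames (reflexive, transitive, with a
   conversely well-founded strict part): a refutation of its root can be pushed
   up along a branch, passing to a strictly accessible world at every right
   premise of (Box); since the branch meets such premises infinitely often, this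
   yields an infinite strictly ascending chain.
   Conversely, a valid sequent has a cyclic proof, found by backward proof
   search: apply (->L), (->R) and (refl) exhaustively, and (Box) only to a
   formula [Box A] on the right whose key [Box P => A] is valid, where [P]
   collects the boxed formulas of the antecedent.  A right premise whose key
   already labels a right premise further down the branch is closed by a
   back-link to it.  There are finitely many keys, so the search terminates; if
   it gets stuck, the saturated sequent is refuted by the countermodels of the
   invalid keys glued below a new root, contradicting validity. *)

(** * List facts *)

Lemma in_elt_iff {A : Type} (x y : A) l1 l2 :
  In y (l1 ++ x :: l2) <-> x = y \/ In y (l1 ++ l2).
Proof. rewrite !in_app_iff; simpl; tauto. Qed.

Lemma incl_elt_inv {A : Type} (x : A) l1 l2 U :
  incl (l1 ++ x :: l2) U -> In x U /\ incl (l1 ++ l2) U.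
Proof.
  intros H; split; [apply H, in_elt|]; intros y Hy; apply H, in_elt_iff; auto.
Qed.

Fixpoint sublists {A : Type} (l : list A) : list (list A) :=
  match l with
  | [] => [[]]
  | x :: l => map (cons x) (sublists l) ++ sublists l
  end.

Lemma filter_in_sublists {A : Type} (f : A -> bool) l : In (filter f l) (sublists l).
Proof.
  induction l as [|a l IH]; simpl; [left; reflexivity|].
  destruct (f a); apply in_app_iff; [left; apply in_map | right]; exact IH.
Qed.

Lemma filter_length_le {A : Type} (f g : A -> bool) l :
  (forall y, f y = true -> g y = true) -> length (filter f l) <= length (filter g l).
Proof.
  intros Hfg; induction l as [|a l IH]; simpl; [lia|].
  destruct (f a) eqn:Ef; [rewrite (Hfg a Ef); simpl; lia|]; destruct (g a); simpl; lia.
Qed.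

Lemma filter_length_lt {A : Type} (f g : A -> bool) l x :
  (forall y, f y = true -> g y = true) -> In x l -> g x = true -> f x = false ->
  length (filter f l) < length (filter g l).
Proof.
  intros Hfg Hx Hg Hf; induction l as [|a l IH]; [destruct Hx|].
  pose proof (filter_length_le f g l Hfg); simpl.
  destruct Hx as [<-|Hx]; [rewrite Hg, Hf; simpl; lia|].
  destruct (f a) eqn:Ef; [rewrite (Hfg a Ef); simpl; specialize (IH Hx); lia|].
  destruct (g a); simpl; specialize (IH Hx); lia.
Qed.

Lemma NoDup_incl_Permutation_app {A : Type} (l G : list A) :
  NoDup l -> incl l G -> exists R, Permutation G (R ++ l).
Proof.
  revert G; induction l as [|a l IH]; intros G Hnd Hincl.
  - exists G; rewrite app_nil_r; reflexivity.
  - inversion Hnd as [|? ? Hna Hnd']; subst.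
    apply incl_cons_inv in Hincl as [Ha Hincl].
    apply in_split in Ha as (g1 & g2 & ->).
    destruct (IH (g1 ++ g2) Hnd') as [R HR].
    { intros y Hy; pose proof (Hincl y Hy) as Hy'; apply in_elt_iff in Hy' as [<-|Hy']; auto.
      contradiction. }
    exists R; rewrite <- Permutation_middle, HR; apply Permutation_middle.
Qed.

Lemma dependent_choice {A : Type} (P : A -> Prop) (R : A -> A -> Prop) (a0 : A) :
  P a0 -> (forall a, P a -> exists b, P b /\ R a b) ->
  exists f : nat -> A, f 0 = a0 /\ forall n, P (f n) /\ R (f n) (f (S n)).
Proof.
  intros H0 Hstep.
  assert (Hg : forall a, exists b, P a -> P b /\ R a b).
  { intros a; destruct (classic (P a)) as [Ha|Ha].
    - destruct (Hstep a Ha) as [b Hb]; exists b; auto.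
    - exists a; contradiction. }
  set (g a := proj1_sig (constructive_indefinite_description _ (Hg a))).
  assert (Hgs : forall a, P a -> P (g a) /\ R a (g a))
    by (intros a; exact (proj2_sig (constructive_indefinite_description _ (Hg a)))).
  exists (fun n => Nat.iter n g a0); split; [reflexivity|].
  assert (HP : forall n, P (Nat.iter n g a0))
    by (induction n; [exact H0 | apply (Hgs _ IHn)]).
  intros n; split; [apply HP | apply (Hgs _ (HP n))].
Qed.

Lemma list_choice {A B : Type} (Q : A -> B -> Prop) (b0 : B) (l : list A) :
  (forall a, In a l -> exists b, Q a b) ->
  exists g : nat -> B, forall a, In a l -> exists i, Q a (g i).
Proof.
  induction l as [|a l IH]; intros Hl.
  - exists (fun _ => b0); intros a [].
  - destruct IH as [g Hg]; [intros a' Ha'; apply Hl; right; exact Ha'|].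
    destruct (Hl a (or_introl eq_refl)) as [b Hb].
    exists (fun n => match n with 0 => b | S n => g n end).
    intros a' [<-|Ha']; [exists 0; exact Hb|].
    destruct (Hg a' Ha') as [i Hi]; exists (S i); exact Hi.
Qed.

(** * Grz-models and soundness of infinite proofs *)

(* Worlds are addresses [list nat], so that countermodels can be glued below a
   fresh root by prefixing an index. *)
Record model := {
  acc : list nat -> list nat -> Prop;
  val : list nat -> nat -> Prop;
  acc_refl : forall x, acc x x;
  acc_trans : forall x y z, acc x y -> acc y z -> acc x z;
  acc_strict_wf : well_founded (fun y x => acc x y /\ x <> y)
}.

Fixpoint forces (M : model) (x : list nat) (f : fml) : Prop :=
  match f with
  | Bot => False
  | Atom p => val M x p
  | Imp A B => forces M x A -> forces M x B
  | Box A => forall y, acc M x y -> forces M y A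
  end.

Definition refutes (M : model) (x : list nat) (s : sequent) : Prop :=
  (forall f, In f (fst s) -> forces M x f) /\ (forall f, In f (snd s) -> ~ forces M x f).

Definition valid (s : sequent) : Prop := forall M x, ~ refutes M x s.

Lemma refutes_seq_eqv M x s s' : seq_eqv s s' -> (refutes M x s <-> refutes M x s').
Proof.
  intros [HL HR]; unfold refutes; split; intros [RL RR]; split; intros f Hf.
  - apply RL, (Permutation_in _ (Permutation_sym HL) Hf).
  - apply RR, (Permutation_in _ (Permutation_sym HR) Hf).
  - apply RL, (Permutation_in _ HL Hf).
  - apply RR, (Permutation_in _ HR Hf).
Qed.

Lemma refutes_consL M x f G D :
  refutes M x (f :: G, D) <-> forces M x f /\ refutes M x (G, D).
Proof.
  unfold refutes; simpl; split.
  - intros [HL HR]; auto.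
  - intros [Hf [HL HR]]; split; [intros g [<-|Hg]|]; auto.
Qed.

Lemma refutes_consR M x f G D :
  refutes M x (G, f :: D) <-> ~ forces M x f /\ refutes M x (G, D).
Proof.
  unfold refutes; simpl; split.
  - intros [HL HR]; auto.
  - intros [Hf [HL HR]]; split; [|intros g [<-|Hg]]; auto.
Qed.

Lemma initial_not_refuted M x s : initial s -> ~ refutes M x s.
Proof.
  intros [[p [HL HR]] | HBot] [RL RR].
  - exact (RR _ HR (RL _ HL)).
  - exact (RL _ HBot).
Qed.

Lemma valid_weaken L Rt L' Rt' : incl L L' -> incl Rt Rt' -> valid (L, Rt) -> valid (L', Rt').
Proof.
  intros HL HR Hv M x [RL RR]; apply (Hv M x); split; simpl in *; auto.
Qed.

Definition refuted_premise (r : rule) (ps : nat -> sequent) (M : model) (x : list nat) : Prop :=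
  exists i y, i < nprem (Some r) /\ refutes M y (ps i) /\ acc M x y
              /\ (r = BoxR -> i = 1 -> x <> y).

Lemma refuted_premise_here r ps M x i :
  i < nprem (Some r) -> (r = BoxR -> i <> 1) -> refutes M x (ps i) -> refuted_premise r ps M x.
Proof.
  intros Hi Hr Hx; exists i, x; split; [exact Hi|]; split; [exact Hx|].
  split; [apply acc_refl | intros Hb Hi1; contradiction (Hr Hb Hi1)].
Qed.

Lemma rule_inst_refuted r c ps M x :
  rule_inst r c ps -> refutes M x c -> refuted_premise r ps M x.
Proof.
  intros Hr Hc; destruct r; simpl in Hr.
  - destruct Hr as (G & D & A & B & HE & H0 & H1).
    apply (refutes_seq_eqv _ _ _ _ HE), refutes_consL in Hc as [HAB Hc].
    destruct (classic (forces M x A)) as [HA|HA].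
    + apply (refuted_premise_here _ _ _ _ 0); [simpl; lia | intros [=] |].
      apply (refutes_seq_eqv _ _ _ _ H0), refutes_consL; auto.
    + apply (refuted_premise_here _ _ _ _ 1); [simpl; lia | intros [=] |].
      apply (refutes_seq_eqv _ _ _ _ H1), refutes_consR; auto.
  - destruct Hr as (G & D & A & B & HE & H0).
    apply (refutes_seq_eqv _ _ _ _ HE), refutes_consR in Hc as [HAB Hc].
    apply (refuted_premise_here _ _ _ _ 0); [simpl; lia | intros [=] |].
    apply (refutes_seq_eqv _ _ _ _ H0), refutes_consL.
    split; [apply NNPP; intros HnA; apply HAB; intros HA; contradiction|].
    apply refutes_consR; split; [intros HB; apply HAB; intros _; exact HB | exact Hc].
  - destruct Hr as (G & D & B & HE & H0).
    apply (refutes_seq_eqv _ _ _ _ HE), refutes_consL in Hc as [HB Hc].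
    apply (refuted_premise_here _ _ _ _ 0); [simpl; lia | intros [=] |].
    apply (refutes_seq_eqv _ _ _ _ H0), refutes_consL.
    split; [apply HB, acc_refl | apply refutes_consL; auto].
  - destruct Hr as (G & D & P & A & HE & H0 & H1).
    apply (refutes_seq_eqv _ _ _ _ HE), refutes_consR in Hc as [HnA Hc].
    destruct (classic (forces M x A)) as [HA|HA].
    + apply not_all_ex_not in HnA as [y Hy]; apply imply_to_and in Hy as [Hxy HyA].
      exists 1, y; split; [simpl; lia|].
      split; [|split; [exact Hxy | intros _ _ <-; contradiction]].
      apply (refutes_seq_eqv _ _ _ _ H1), refutes_consR; split; [exact HyA|].
      split; [|intros _ []].
      intros f Hf; apply in_map_iff in Hf as (C & <- & HC); intros z Hz.
      apply (proj1 Hc (Box C)); [apply in_app_iff; right; apply in_map, HC|].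
      apply (acc_trans _ _ _ _ Hxy Hz).
    + apply (refuted_premise_here _ _ _ _ 0); [simpl; lia | intros _ [=] |].
      apply (refutes_seq_eqv _ _ _ _ H0), refutes_consR; auto.
Qed.

Lemma branch_prefix_S b n : branch_prefix b (S n) = branch_prefix b n ++ [b n].
Proof. unfold branch_prefix; rewrite seq_S, map_app; reflexivity. Qed.

Lemma rprem_child t w i : rprem t (w ++ [i]) -> rl t w = Some BoxR /\ i = 1.
Proof.
  intros (w' & E & Hw); apply app_inj_tail in E as [-> ->]; auto.
Qed.

Lemma refuted_branch t s M x0 : inf_proof t s -> refutes M x0 s ->
  exists (b : nat -> nat) (x : nat -> list nat), forall n,
    node t (branch_prefix b n) /\ acc M (x n) (x (S n))
    /\ (rprem t (branch_prefix b (S n)) -> x n <> x (S n)).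
Proof.
  intros (Hroot & Hrules & Hleaf & _) Hx0.
  destruct (dependent_choice
    (fun wx => node t (fst wx) /\ refutes M (snd wx) (lab t (fst wx)))
    (fun wx wy => exists i, fst wy = fst wx ++ [i] /\ acc M (snd wx) (snd wy)
                            /\ (rprem t (fst wy) -> snd wx <> snd wy))
    ([], x0)) as (f & Hf0 & Hf).
  - split; [constructor | apply (refutes_seq_eqv _ _ _ _ Hroot), Hx0].
  - intros [w x] [Hw Hr]; simpl in *.
    specialize (Hrules w Hw); unfold rules_ok in Hrules.
    destruct (rl t w) as [r|] eqn:Er.
    2: { exfalso; exact (initial_not_refuted _ _ _ (Hleaf w Hw Er) Hr). }
    destruct (rule_inst_refuted _ _ _ _ _ Hrules Hr) as (i & y & Hi & Hy & Hxy & Hstrict).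
    exists (w ++ [i], y); simpl; split; [split; [apply node_child; rewrite ?Er|]; auto|].
    exists i; repeat split; auto.
    intros Hrp; apply rprem_child in Hrp as [Hb ->]; rewrite Er in Hb; injection Hb as ->; auto.
  - set (b n := last (fst (f (S n))) 0).
    assert (Hpre : forall n, fst (f n) = branch_prefix b n).
    { induction n as [|n IH]; [rewrite Hf0; reflexivity|].
      destruct (proj2 (Hf n)) as (i & Ei & _).
      rewrite branch_prefix_S, <- IH; unfold b; rewrite Ei, last_last; reflexivity. }
    exists b, (fun n => snd (f n)); intros n.
    destruct (Hf n) as [[Hn _] (i & _ & Hacc & Hstrict)].
    rewrite <- !Hpre; auto.
Qed.

Lemma acc_chain_not_infinitely_strict M (x : nat -> list nat) :
  (forall n, acc M (x n) (x (S n))) -> ~ (forall n, exists m, n <= m /\ x m <> x (S m)).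
Proof.
  intros Hchain Hstrict.
  assert (Hreach : forall n k, acc M (x n) (x (k + n))).
  { intros n k; induction k as [|k IH]; [apply acc_refl|].
    exact (acc_trans _ _ _ _ IH (Hchain _)). }
  assert (Hno : forall y, forall n, x n = y -> False).
  { intros y; induction (acc_strict_wf M y) as [y _ IH]; intros n <-.
    destruct (Hstrict n) as (m & Hnm & Hm).
    assert (Hnm' : acc M (x n) (x m)) by (replace m with ((m - n) + n) by lia; apply Hreach).
    destruct (classic (x (S m) = x n)) as [E|E].
    - apply (IH (x m)) with m; [split; [exact Hnm' | congruence] | reflexivity].
    - apply (IH (x (S m))) with (S m); [|reflexivity].
      split; [exact (acc_trans _ _ _ _ Hnm' (Hchain m)) | auto]. }
  exact (Hno _ 0 eq_refl).
Qed.

Lemma inf_proof_sound t s : inf_proof t s -> valid s.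
Proof.
  intros Hinf M x0 Hx0.
  destruct (refuted_branch _ _ _ _ Hinf Hx0) as (b & x & Hb).
  apply (acc_chain_not_infinitely_strict M x); [apply Hb|].
  intros n; destruct (proj2 (proj2 (proj2 Hinf)) b (fun k => proj1 (Hb k)) n) as (m & Hnm & Hm).
  exists m; split; [exact Hnm | exact (proj2 (proj2 (Hb m)) Hm)].
Qed.

(** * Cyclic proofs from finite trees with back-links *)

(* A finite derivation tree; the last field of a leaf that is not initial is the
   address of its companion (the field is ignored elsewhere).  In
   [ctree_ok anc p b T], [p] is the address of [T], [anc] lists the labels and
   addresses of its ancestors, and [b] says whether [T] is the right premise of
   a (Box) rule. *)
Inductive ctree : Type :=
  CNode : sequent -> option rule -> list ctree -> list nat -> ctree.

Definition ct_label (T : ctree) : sequent := let 'CNode s _ _ _ := T in s.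

Definition ct_dummy : ctree := CNode ([], []) None [] [].

Definition right_premise (r : rule) (i : nat) : bool :=
  match r with BoxR => Nat.eqb i 1 | _ => false end.

Inductive ctree_ok : list (sequent * list nat) -> list nat -> bool -> ctree -> Prop :=
| ctree_ok_leaf anc p b s q :
    initial s \/ (b = true /\ exists s', In (s', q) anc /\ seq_eqv s' s) ->
    ctree_ok anc p b (CNode s None [] q)
| ctree_ok_node anc p b s r ch q :
    length ch = nprem (Some r) ->
    rule_inst r s (fun i => ct_label (nth i ch ct_dummy)) ->
    (forall i, i < length ch ->
       ctree_ok ((s, p) :: anc) (p ++ [i]) (right_premise r i) (nth i ch ct_dummy)) ->
    ctree_ok anc p b (CNode s (Some r) ch q).

Fixpoint subtree (T : ctree) (w : list nat) : option ctree :=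
  match w with
  | [] => Some T
  | i :: w' => let 'CNode _ _ ch _ := T in
               match nth_error ch i with Some T' => subtree T' w' | None => None end
  end.

Lemma subtree_snoc T w i : subtree T (w ++ [i]) =
  match subtree T w with Some (CNode _ _ ch _) => nth_error ch i | None => None end.
Proof.
  revert T; induction w as [|j w IH]; intros [s r ch q]; simpl.
  - destruct (nth_error ch i); reflexivity.
  - destruct (nth_error ch j); [apply IH | reflexivity].
Qed.

Fixpoint depth (T : ctree) : nat :=
  let 'CNode _ _ ch _ := T in S (list_max (map depth ch)).

Lemma subtree_depth T w T' : subtree T w = Some T' -> length w < depth T.
Proof.
  revert T; induction w as [|i w IH]; intros [s r ch q] Hw; simpl in *; [lia|].
  destruct (nth_error ch i) as [Ti|] eqn:Ei; [|discriminate].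
  specialize (IH _ Hw).
  assert (Hle : depth Ti <= list_max (map depth ch)).
  { pose proof (proj1 (list_max_le (map depth ch) _) (le_n _)) as Hmax.
    rewrite Forall_forall in Hmax; apply Hmax, in_map, (nth_error_In _ _ Ei). }
  lia.
Qed.

Definition ct_at (T : ctree) (w : list nat) : ctree :=
  match subtree T w with Some T' => T' | None => ct_dummy end.

Definition ptree_of (T : ctree) : ptree := {|
  lab := fun w => ct_label (ct_at T w);
  rl := fun w => let 'CNode _ r _ _ := ct_at T w in r |}.

Definition companion (T : ctree) (w : list nat) : list nat :=
  let 'CNode _ _ _ q := ct_at T w in q.

Definition ancestors_ok (T : ctree) (w : list nat) (anc : list (sequent * list nat)) : Prop :=
  forall s q, In (s, q) anc -> prefix q w /\ length q < length w /\ lab (ptree_of T) q = s.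

Lemma ctree_ok_at_node T w : ctree_ok [] [] false T -> node (ptree_of T) w ->
  exists anc b T', subtree T w = Some T' /\ ctree_ok anc w b T'
    /\ ancestors_ok T w anc /\ (b = true -> rprem (ptree_of T) w).
Proof.
  intros HT Hw; induction Hw as [|w i Hw IH Hi].
  - exists [], false, T; split; [reflexivity|]; split; [exact HT|].
    split; [intros ? ? []| discriminate].
  - destruct IH as (anc & b & T' & Hsub & Hok & Hanc & _).
    cbn [rl ptree_of] in Hi; unfold ct_at in Hi; rewrite Hsub in Hi.
    destruct Hok as [|anc' p b' s r ch q Hlen Hrule Hch]; [simpl in Hi; lia|].
    change (i < nprem (Some r)) in Hi; rewrite <- Hlen in Hi.
    exists ((s, p) :: anc'), (right_premise r i), (nth i ch ct_dummy); split; [|split; [|split]].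
    + rewrite subtree_snoc, Hsub; apply nth_error_nth', Hi.
    + apply Hch, Hi.
    + intros s' q' [E|Hin].
      * injection E as <- <-; rewrite length_app; simpl.
        split; [exists [i]; reflexivity|]; split; [lia|].
        unfold ct_at; rewrite Hsub; reflexivity.
      * destruct (Hanc _ _ Hin) as ([x ->] & Hlt & Hlab).
        split; [exists (x ++ [i]); symmetry; apply app_assoc|].
        rewrite length_app; simpl; split; [lia | exact Hlab].
    + intros Hr; destruct r; try discriminate; apply Nat.eqb_eq in Hr as ->.
      exists p; split; [reflexivity | simpl; unfold ct_at; rewrite Hsub; reflexivity].
Qed.

Lemma rule_inst_ext r c ps ps' :
  (forall i, i < nprem (Some r) -> ps i = ps' i) -> rule_inst r c ps -> rule_inst r c ps'.
Proof.
  intros E; destruct r; simpl in *; rewrite <- ?(E 0), <- ?(E 1) by lia; auto.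
Qed.

Lemma ct_at_child T w s r ch q i : subtree T w = Some (CNode s r ch q) ->
  ct_at T (w ++ [i]) = nth i ch ct_dummy.
Proof.
  intros Hsub; unfold ct_at; rewrite subtree_snoc, Hsub.
  destruct (nth_error ch i) as [Ti|] eqn:Ei.
  - symmetry; apply nth_error_nth, Ei.
  - symmetry; apply nth_overflow, nth_error_None, Ei.
Qed.

Lemma ptree_of_rules_ok T w : ctree_ok [] [] false T -> node (ptree_of T) w ->
  rules_ok (ptree_of T) w.
Proof.
  intros HT Hw; destruct (ctree_ok_at_node T w HT Hw) as (anc & b & T' & Hsub & Hok & _).
  unfold rules_ok; simpl; unfold ct_at at 1 2; rewrite Hsub.
  destruct Hok as [|anc' w' b' s r ch q _ Hrule _]; [exact I|].
  refine (rule_inst_ext _ _ _ _ _ Hrule); intros i _.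
  rewrite (ct_at_child _ _ _ _ _ _ i Hsub); reflexivity.
Qed.

Lemma ptree_of_backlinks T a : ctree_ok [] [] false T -> node (ptree_of T) a ->
  rl (ptree_of T) a = None -> ~ initial (lab (ptree_of T) a) ->
  prefix (companion T a) a
  /\ (exists c, prefix (companion T a) c /\ c <> companion T a /\ prefix c a
                /\ rprem (ptree_of T) c)
  /\ seq_eqv (lab (ptree_of T) (companion T a)) (lab (ptree_of T) a).
Proof.
  intros HT Ha Hleaf Hni.
  destruct (ctree_ok_at_node T a HT Ha) as (anc & b & T' & Hsub & Hok & Hanc & Hb).
  simpl in Hleaf, Hni |- *; unfold companion, ct_at in *; rewrite Hsub in *.
  destruct Hok as [anc' a' b' s q Hlink|]; [|discriminate].
  destruct Hlink as [|[-> (s' & Hin & Heqv)]]; [contradiction|].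
  destruct (Hanc _ _ Hin) as (Hpre & Hlt & Hlab); simpl in Hlab; unfold ct_at in Hlab.
  split; [exact Hpre|]; split.
  - exists a'; split; [exact Hpre|]; split; [intros ->; lia|].
    split; [exists []; symmetry; apply app_nil_r | apply Hb; reflexivity].
  - rewrite Hlab; exact Heqv.
Qed.

Lemma ctree_cyclic_proof T : ctree_ok [] [] false T -> has_cyclic_proof (ct_label T).
Proof.
  intros HT; exists (ptree_of T), (companion T); split; [|split; [|split]].
  - split; apply Permutation_refl.
  - exists (depth T); intros w Hw.
    destruct (ctree_ok_at_node T w HT Hw) as (_ & _ & T' & Hsub & _).
    apply Nat.lt_le_incl, (subtree_depth _ _ _ Hsub).
  - intros w; apply ptree_of_rules_ok, HT.
  - intros a; apply ptree_of_backlinks, HT.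
Qed.

Definition has_ctree (anc : list (sequent * list nat)) (p : list nat) (b : bool) (s : sequent)
  : Prop :=
  exists T, ctree_ok anc p b T /\ ct_label T = s.

Lemma has_ctree_initial anc p b s : initial s -> has_ctree anc p b s.
Proof. intros Hs; exists (CNode s None [] []); split; [constructor; left|]; auto. Qed.

Lemma has_ctree_backlink anc p s q : In (s, q) anc -> has_ctree anc p true s.
Proof.
  intros Hq; exists (CNode s None [] q); split; [|reflexivity].
  constructor; right; split; [reflexivity|]; exists s; split; [exact Hq | split; reflexivity].
Qed.

Lemma has_ctree_unary anc p b s r s0 :
  nprem (Some r) = 1 -> rule_inst r s (fun _ => s0) ->
  has_ctree ((s, p) :: anc) (p ++ [0]) false s0 -> has_ctree anc p b s.
Proof.
  intros Hr Hrule (T0 & HT0 & <-).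
  exists (CNode s (Some r) [T0] []); split; [|reflexivity].
  constructor; [rewrite Hr; reflexivity| |].
  - refine (rule_inst_ext _ _ _ _ _ Hrule); intros i Hi; rewrite Hr in Hi.
    destruct i; [reflexivity | lia].
  - intros [|i] Hi; [|simpl in Hi; lia].
    replace (right_premise r 0) with false by (destruct r; reflexivity); exact HT0.
Qed.

Lemma has_ctree_binary anc p b s r s0 s1 :
  nprem (Some r) = 2 -> rule_inst r s (fun i => match i with 0 => s0 | _ => s1 end) ->
  has_ctree ((s, p) :: anc) (p ++ [0]) false s0 ->
  has_ctree ((s, p) :: anc) (p ++ [1]) (right_premise r 1) s1 -> has_ctree anc p b s.
Proof.
  intros Hr Hrule (T0 & HT0 & <-) (T1 & HT1 & <-).
  exists (CNode s (Some r) [T0; T1] []); split; [|reflexivity].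
  constructor; [rewrite Hr; reflexivity| |].
  - refine (rule_inst_ext _ _ _ _ _ Hrule); intros i Hi; rewrite Hr in Hi.
    destruct i as [|[|i]]; [reflexivity | reflexivity | lia].
  - intros [|[|i]] Hi; [| exact HT1 | simpl in Hi; lia].
    replace (right_premise r 0) with false by (destruct r; reflexivity); exact HT0.
Qed.

(** * Subformulas *)

Definition fml_eq_dec (f g : fml) : {f = g} + {f <> g}.
Proof. decide equality; apply Nat.eq_dec. Defined.

Fixpoint subformulas (f : fml) : list fml :=
  f :: match f with
       | Imp A B => subformulas A ++ subformulas B
       | Box A => subformulas A
       | _ => []
       end.

Lemma subformulas_refl f : In f (subformulas f).
Proof. destruct f; left; reflexivity. Qed.

Lemma subformulas_trans f g : In g (subformulas f) -> incl (subformulas g) (subformulas f).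
Proof.
  induction f as [| p | A IHA B IHB | A IHA]; simpl; intros [<-|H]; try apply incl_refl;
    try contradiction.
  - intros x Hx; right; apply in_app_iff.
    apply in_app_iff in H as [H|H]; [left; apply (IHA H x Hx) | right; apply (IHB H x Hx)].
  - intros x Hx; right; apply (IHA H x Hx).
Qed.

Record subformula_closed (U : list fml) : Prop := {
  closed_imp : forall A B, In (Imp A B) U -> In A U /\ In B U;
  closed_box : forall A, In (Box A) U -> In A U
}.

Definition closure (l : list fml) : list fml := nodup fml_eq_dec (flat_map subformulas l).

Lemma in_closure l f g : In f l -> In g (subformulas f) -> In g (closure l).
Proof. intros Hf Hg; apply nodup_In, in_flat_map; eauto. Qed.

Lemma incl_closure l : incl l (closure l).
Proof. intros f Hf; apply (in_closure l f f Hf), subformulas_refl. Qed.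

Lemma closure_closed l : subformula_closed (closure l).
Proof.
  split.
  - intros A B H; apply nodup_In, in_flat_map in H as (f & Hf & Hs).
    split; apply (in_closure l f _ Hf), (subformulas_trans f _ Hs); simpl; right;
      apply in_app_iff; [left | right]; apply subformulas_refl.
  - intros A H; apply nodup_In, in_flat_map in H as (f & Hf & Hs).
    apply (in_closure l f _ Hf), (subformulas_trans f _ Hs); right; apply subformulas_refl.
Qed.

Fixpoint fml_size (f : fml) : nat :=
  match f with
  | Imp A B => S (fml_size A + fml_size B)
  | Box A => S (fml_size A)
  | _ => 1
  end.

Definition size (l : list fml) : nat := list_sum (map fml_size l).

Ltac size_lia :=
  unfold size; rewrite ?map_app, ?list_sum_app; simpl;
  rewrite ?map_app, ?list_sum_app; simpl; lia.

(** * Countermodels of saturated sequents *)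

(* During the search between two right premises of (Box), [(G, D)] is the
   current sequent, [(L, Rt)] accumulates every formula that has occurred on
   each side, and [Rf] lists the [B] to which (refl) has been applied.  The
   invariant says that an implication that has left the current sequent has
   been decomposed, which is what the truth lemma needs at a saturated
   sequent. *)
Record hintikka (G D L Rt Rf : list fml) : Prop := {
  hk_left : forall f, In f L -> In f G \/ exists A B, f = Imp A B;
  hk_right : forall f, In f Rt ->
    In f D \/ (exists A B, f = Imp A B) \/ (exists A, f = Box A /\ In A Rt);
  hk_imp_left : forall A B, In (Imp A B) L -> In (Imp A B) G \/ In B L \/ In A Rt;
  hk_imp_right : forall A B, In (Imp A B) Rt -> In (Imp A B) D \/ (In A L /\ In B Rt);
  hk_refl : incl Rf L
}.

Lemma hintikka_start G D : hintikka G D G D [].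
Proof. constructor; auto; intros ? []. Qed.

Lemma hintikka_ImpL_left l1 l2 A B D L Rt Rf :
  hintikka (l1 ++ Imp A B :: l2) D L Rt Rf -> hintikka (B :: l1 ++ l2) D (B :: L) Rt Rf.
Proof.
  intros [HL HR HIL HIR Hrf]; constructor; auto using incl_tl.
  - intros f [<-|Hf]; [left; left; reflexivity|].
    destruct (HL f Hf) as [Hin|Himp]; [|right; exact Himp].
    apply in_elt_iff in Hin as [<-|Hin]; [right; eauto | left; right; exact Hin].
  - intros A' B' [E|Hf]; [left; left; exact E|].
    destruct (HIL A' B' Hf) as [Hin|[HB|HA]]; [|right; left; right; exact HB | auto].
    apply in_elt_iff in Hin as [E|Hin]; [injection E as -> ->; right; left; left; reflexivity|].
    left; right; exact Hin.
  - intros A' B' Hf; destruct (HIR A' B' Hf) as [|[]]; [left | right; split; [right|]]; auto.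
Qed.

Lemma hintikka_ImpL_right l1 l2 A B D L Rt Rf :
  hintikka (l1 ++ Imp A B :: l2) D L Rt Rf -> hintikka (l1 ++ l2) (A :: D) L (A :: Rt) Rf.
Proof.
  intros [HL HR HIL HIR Hrf]; constructor; auto.
  - intros f Hf; destruct (HL f Hf) as [Hin|Himp]; [|right; exact Himp].
    apply in_elt_iff in Hin as [<-|Hin]; [right; eauto | left; exact Hin].
  - intros f [<-|Hf]; [left; left; reflexivity|].
    destruct (HR f Hf) as [|[|(A' & -> & HA')]]; [left; right | right; left | ]; auto.
    right; right; exists A'; split; [reflexivity | right; exact HA'].
  - intros A' B' Hf.
    destruct (HIL A' B' Hf) as [Hin|[HB|HA]]; [| auto | right; right; right; exact HA].
    apply in_elt_iff in Hin as [E|Hin]; [injection E as -> ->; right; right; left; reflexivity|].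
    left; exact Hin.
  - intros A' B' [E|Hf]; [left; left; exact E|].
    destruct (HIR A' B' Hf) as [|[]]; [left; right | right; split; [|right]]; auto.
Qed.

Lemma hintikka_ImpR l1 l2 A B G L Rt Rf :
  hintikka G (l1 ++ Imp A B :: l2) L Rt Rf ->
  hintikka (A :: G) (B :: l1 ++ l2) (A :: L) (B :: Rt) Rf.
Proof.
  intros [HL HR HIL HIR Hrf]; constructor; auto using incl_tl.
  - intros f [<-|Hf]; [left; left; reflexivity|].
    destruct (HL f Hf); [left; right | right]; auto.
  - intros f [<-|Hf]; [left; left; reflexivity|].
    destruct (HR f Hf) as [Hin|[Himp|(A' & -> & HA')]]; [| right; left; exact Himp |].
    + apply in_elt_iff in Hin as [<-|Hin]; [right; left; eauto | left; right; exact Hin].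
    + right; right; exists A'; split; [reflexivity | right; exact HA'].
  - intros A' B' [E|Hf]; [left; left; exact E|].
    destruct (HIL A' B' Hf) as [|[]];
      [left; right | right; left; right | right; right; right]; auto.
  - intros A' B' [E|Hf]; [left; left; exact E|].
    destruct (HIR A' B' Hf) as [Hin|[]]; [|right; split; right; auto].
    apply in_elt_iff in Hin as [E|Hin]; [injection E as -> ->; right; split; left; reflexivity|].
    left; right; exact Hin.
Qed.

Lemma hintikka_refl B G D L Rt Rf :
  hintikka G D L Rt Rf -> hintikka (B :: G) D (B :: L) Rt (B :: Rf).
Proof.
  intros [HL HR HIL HIR Hrf]; constructor; auto.
  - intros f [<-|Hf]; [left; left; reflexivity|].
    destruct (HL f Hf); [left; right | right]; auto.
  - intros A' B' [E|Hf]; [left; left; exact E|].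
    destruct (HIL A' B' Hf) as [|[]]; [left; right | right; left; right | right; right]; auto.
  - intros A' B' Hf; destruct (HIR A' B' Hf) as [|[]]; [left | right; split; [right|]]; auto.
  - apply incl_cons; [left; reflexivity | apply incl_tl, Hrf].
Qed.

Lemma hintikka_BoxR l1 l2 A G L Rt Rf :
  hintikka G (l1 ++ Box A :: l2) L Rt Rf -> hintikka G (A :: l1 ++ l2) L (A :: Rt) Rf.
Proof.
  intros [HL HR HIL HIR Hrf]; constructor; auto.
  - intros f [<-|Hf]; [left; left; reflexivity|].
    destruct (HR f Hf) as [Hin|[Himp|(A' & -> & HA')]]; [| right; left; exact Himp |].
    + apply in_elt_iff in Hin as [<-|Hin]; [|left; right; exact Hin].
      right; right; exists A; split; [reflexivity | left; reflexivity].
    + right; right; exists A'; split; [reflexivity | right; exact HA'].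
  - intros A' B' Hf.
    destruct (HIL A' B' Hf) as [|[]]; [left | right; left | right; right; right]; auto.
  - intros A' B' [E|Hf]; [left; left; exact E|].
    destruct (HIR A' B' Hf) as [Hin|[]]; [|right; split; [|right]; auto].
    apply in_elt_iff in Hin as [E|Hin]; [discriminate E | left; right; exact Hin].
Qed.

Lemma point_acc_strict_wf : well_founded (fun y x : list nat => x = y /\ x <> y).
Proof. intros x; constructor; intros y [-> Hne]; contradiction. Qed.

Definition point_model : model := {|
  acc := @eq (list nat); val := fun _ _ => False;
  acc_refl := @eq_refl (list nat); acc_trans := @eq_trans (list nat);
  acc_strict_wf := point_acc_strict_wf |}.

Section Glue.

Variable sub : nat -> model * list nat.
Variable enter : nat -> Prop.
Variable root_val : nat -> Prop.

Definition glue_acc (x y : list nat) : Prop :=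
  match x, y with
  | [], [] => True
  | [], i :: w => enter i /\ acc (fst (sub i)) (snd (sub i)) w
  | _ :: _, [] => False
  | i :: w, j :: v => i = j /\ acc (fst (sub i)) w v
  end.

Definition glue_val (x : list nat) (p : nat) : Prop :=
  match x with [] => root_val p | i :: w => val (fst (sub i)) w p end.

Lemma glue_acc_refl x : glue_acc x x.
Proof. destruct x; simpl; auto using acc_refl. Qed.

Lemma glue_acc_trans x y z : glue_acc x y -> glue_acc y z -> glue_acc x z.
Proof.
  destruct x as [|i w], y as [|j v], z as [|k u]; simpl; try tauto.
  - intros [Hi Hv] [<- Hu]; eauto using acc_trans.
  - intros [<- Hv] [<- Hu]; eauto using acc_trans.
Qed.

Lemma glue_acc_strict_wf_at i w :
  Acc (fun y x => glue_acc x y /\ x <> y) (i :: w).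
Proof.
  induction (acc_strict_wf (fst (sub i)) w) as [w _ IH].
  constructor; intros [|j v] [Hv Hne]; [contradiction|]; destruct Hv as [<- Hwv].
  apply IH; split; [exact Hwv | intros ->; apply Hne; reflexivity].
Qed.

Lemma glue_acc_strict_wf : well_founded (fun y x => glue_acc x y /\ x <> y).
Proof.
  intros [|i w]; [|apply glue_acc_strict_wf_at].
  constructor; intros [|j v] [_ Hne]; [contradiction | apply glue_acc_strict_wf_at].
Qed.

Definition glue : model := {|
  acc := glue_acc; val := glue_val;
  acc_refl := glue_acc_refl; acc_trans := glue_acc_trans;
  acc_strict_wf := glue_acc_strict_wf |}.

Lemma forces_glue i w f : forces glue (i :: w) f <-> forces (fst (sub i)) w f.
Proof.
  revert w; induction f as [| p | A IHA B IHB | A IHA]; intros w; simpl; try tauto.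
  - rewrite IHA, IHB; tauto.
  - split.
    + intros Hf v Hv; apply IHA, Hf; split; auto.
    + intros Hf [|j v] Hv; [contradiction|]; destruct Hv as [<- Hv]; apply IHA, Hf, Hv.
Qed.

End Glue.

Record saturated (G D Rf : list fml) : Prop := {
  sat_imp_left : forall A B, ~ In (Imp A B) G;
  sat_imp_right : forall A B, ~ In (Imp A B) D;
  sat_refl : forall B, In (Box B) G -> In B Rf;
  sat_not_initial : ~ initial (G, D)
}.

Section Countermodel.

Variables G D L Rt Rf P : list fml.
Hypothesis HK : hintikka G D L Rt Rf.
Hypothesis HS : saturated G D Rf.
Hypothesis HP : forall A, In (Box A) G -> In A P.
Variable sub : nat -> model * list nat.
Hypothesis Hsub : forall A, In (Box A) D ->
  exists i, refutes (fst (sub i)) (snd (sub i)) (map Box P, [A]).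

(* A submodel is entered only if its root forces [Box B] for every [B] in [P];
   this makes the boxed formulas of [L] true at the root. *)
Let enter (i : nat) : Prop := forall B, In B P -> forces (fst (sub i)) (snd (sub i)) (Box B).
Let M := glue sub enter (fun p => In (Atom p) L).

Lemma glue_truth f : (In f L -> forces M [] f) /\ (In f Rt -> ~ forces M [] f).
Proof.
  destruct HK as [HL HR HIL HIR Hrf], HS as [HnIL HnIR Hrefl Hni].
  induction f as [| p | A IHA B IHB | A IHA]; split; simpl; intros Hf.
  - destruct (HL _ Hf) as [HG|(? & ? & ?)]; [|discriminate].
    apply Hni; right; exact HG.
  - tauto.
  - exact Hf.
  - intros Hp; apply Hni; left; exists p; split.
    + destruct (HL _ Hp) as [HG|(? & ? & ?)]; [exact HG | discriminate].
    + destruct (HR _ Hf) as [HD|[(? & ? & ?)|(? & ? & ?)]]; [exact HD | discriminate..].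
  - destruct (HIL A B Hf) as [HG|[HB|HA]]; [exfalso; eapply HnIL, HG | |].
    + intros _; apply IHB, HB.
    + intros HA'; exfalso; exact (proj2 IHA HA HA').
  - destruct (HIR A B Hf) as [HD|[HA HB]]; [exfalso; eapply HnIR, HD|].
    intros HAB; apply (proj2 IHB HB), HAB, (proj1 IHA HA).
  - destruct (HL _ Hf) as [HG|(? & ? & ?)]; [|discriminate].
    intros [|i w] Hw.
    + apply (proj1 IHA), Hrf, Hrefl, HG.
    + destruct Hw as [Hent Hw]; apply forces_glue, (Hent A (HP A HG) w Hw).
  - intros HA.
    destruct (HR _ Hf) as [HD|[(? & ? & ?)|(A' & E & HA')]]; [| discriminate |].
    + destruct (Hsub A HD) as [i [Hi HiA]].
      apply (HiA A (or_introl eq_refl)), (forces_glue sub enter (fun p => In (Atom p) L) i).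
      apply HA; split; [|apply acc_refl].
      intros B HB; exact (Hi (Box B) (in_map Box P B HB)).
    + injection E as <-; apply (proj2 IHA HA'), HA; exact I.
Qed.

End Countermodel.

Lemma saturated_not_valid G D L Rt Rf P :
  hintikka G D L Rt Rf -> saturated G D Rf -> (forall A, In (Box A) G -> In A P) ->
  (forall A, In (Box A) D -> ~ valid (map Box P, [A])) -> ~ valid (L, Rt).
Proof.
  intros HK HS HP HD Hv.
  destruct (list_choice
              (fun f My => forall A, f = Box A -> refutes (fst My) (snd My) (map Box P, [A]))
              (point_model, []) D) as [sub Hsub].
  { intros [| | |A] Hf; try (exists (point_model, []); discriminate).
    apply HD, not_all_ex_not in Hf as [M' HM']; apply not_all_ex_not in HM' as [y Hy].
    exists (M', y); intros A' [= <-]; apply NNPP, Hy. }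
  assert (Hsub' : forall A, In (Box A) D ->
            exists i, refutes (fst (sub i)) (snd (sub i)) (map Box P, [A]))
    by (intros A HA; destruct (Hsub _ HA) as [i Hi]; exists i; apply Hi; reflexivity).
  pose proof (glue_truth G D L Rt Rf P HK HS HP sub Hsub') as Htruth.
  refine (Hv _ [] (conj _ _)); intros f Hf;
    [apply (proj1 (Htruth f) Hf) | apply (proj2 (Htruth f) Hf)].
Qed.

(** * Proof search *)

Definition key : Type := (list fml * fml)%type.

Definition key_eq_dec (k k' : key) : {k = k'} + {k <> k'}.
Proof. decide equality; [apply fml_eq_dec | apply list_eq_dec, fml_eq_dec]. Defined.

(* The key [(P, A)] stands for the sequent [Box P => A].  The search only uses
   keys whose [P] is a sublist of [U], so there are finitely many. *)
Definition key_sequent (k : key) : sequent := (map Box (fst k), [snd k]).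

(* [KH] pairs every key used on the current branch with the address of the
   right premise it labels. *)
Definition history_ok (KH : list (key * list nat)) (anc : list (sequent * list nat))
  (p : list nat) (s : sequent) : Prop :=
  forall k q, In (k, q) KH -> In (key_sequent k, q) anc \/ (q = p /\ key_sequent k = s).

Lemma history_ok_child KH anc p s p' s' :
  history_ok KH anc p s -> history_ok KH ((s, p) :: anc) p' s'.
Proof.
  intros Hh k q Hkq; left; destruct (Hh k q Hkq) as [Hin|[-> <-]]; [right | left]; auto.
Qed.

Lemma history_ok_open KH anc p s k p' :
  history_ok KH anc p s -> history_ok ((k, p') :: KH) ((s, p) :: anc) p' (key_sequent k).
Proof.
  intros Hh k' q [E|Hkq]; [injection E as -> ->; right; auto|].
  apply (history_ok_child _ _ _ _ p' (key_sequent k) Hh _ _ Hkq).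
Qed.

Definition searchable (KH : list (key * list nat)) (G D : list fml) : Prop :=
  forall anc p b, history_ok KH anc p (G, D) -> has_ctree anc p b (G, D).

Section Search.

Variable U : list fml.
Hypothesis U_closed : subformula_closed U.
Hypothesis U_nodup : NoDup U.

Definition keys : list key := list_prod (sublists U) U.

Definition boxed_part (G : list fml) : list fml :=
  filter (fun B => if in_dec fml_eq_dec (Box B) G then true else false) U.

Definition unused_keys (KH : list (key * list nat)) : nat :=
  length (filter (fun k => if in_dec key_eq_dec k (map fst KH) then false else true) keys).

Lemma unused_keys_open KH k q :
  In k keys -> ~ In k (map fst KH) -> unused_keys ((k, q) :: KH) < unused_keys KH.
Proof.
  intros Hk Hnew; apply (filter_length_lt _ _ _ k); [|exact Hk| |]; cbv beta;
    try change (map fst ((k, q) :: KH)) with (k :: map fst KH).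
  - intros k'; destruct (in_dec key_eq_dec k' (k :: map fst KH)) as [|Hk']; [intros [=]|intros _].
    destruct (in_dec key_eq_dec k' (map fst KH)) as [Hin|]; [|reflexivity].
    exfalso; apply Hk'; right; exact Hin.
  - destruct (in_dec key_eq_dec k (map fst KH)); [contradiction | reflexivity].
  - destruct (in_dec key_eq_dec k (k :: map fst KH)) as [|Hk']; [reflexivity|].
    exfalso; apply Hk'; left; reflexivity.
Qed.

Lemma in_boxed_part G B : In B (boxed_part G) <-> In B U /\ In (Box B) G.
Proof.
  unfold boxed_part; rewrite filter_In.
  destruct (in_dec fml_eq_dec (Box B) G); intuition discriminate.
Qed.

Lemma boxed_part_split G : exists R, Permutation G (R ++ map Box (boxed_part G)).
Proof.
  apply NoDup_incl_Permutation_app.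
  - apply Injective_map_NoDup; [intros A B HAB; injection HAB; auto | apply NoDup_filter, U_nodup].
  - intros f Hf; apply in_map_iff in Hf as (B & <- & HB); apply in_boxed_part, HB.
Qed.

Record search_inv (G D L Rt Rf : list fml) : Prop := {
  si_left : incl G U;
  si_right : incl D U;
  si_refl_nodup : NoDup Rf;
  si_refl : incl Rf U;
  si_valid : valid (L, Rt);
  si_hintikka : hintikka G D L Rt Rf
}.

(* (refl) enlarges the sequent but also [Rf], which stays inside [U]; a new right
   premise of (Box) resets everything else but uses up a key. *)
Definition measure (KH : list (key * list nat)) (Rf G D : list fml) : nat * (nat * nat) :=
  (unused_keys KH, (length U - length Rf, size (G ++ D))).

Definition search_lt : nat * (nat * nat) -> nat * (nat * nat) -> Prop :=
  slexprod _ _ lt (slexprod _ _ lt lt).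

Lemma search_lt_wf : well_founded search_lt.
Proof. apply wf_slexprod; [|apply wf_slexprod]; apply lt_wf. Qed.

Definition searchable_below (KH : list (key * list nat)) (Rf G D : list fml) : Prop :=
  forall KH' G' D' L' Rt' Rf', search_lt (measure KH' Rf' G' D') (measure KH Rf G D) ->
  search_inv G' D' L' Rt' Rf' -> searchable KH' G' D'.

Lemma search_lt_size KH Rf G D G' D' :
  size (G' ++ D') < size (G ++ D) -> search_lt (measure KH Rf G' D') (measure KH Rf G D).
Proof. intros H; apply right_slex, right_slex, H. Qed.

Lemma search_inv_ImpL_left l1 l2 A B D L Rt Rf :
  search_inv (l1 ++ Imp A B :: l2) D L Rt Rf -> search_inv (B :: l1 ++ l2) D (B :: L) Rt Rf.
Proof.
  intros [HG HD Hnd HRf Hv HK]; apply incl_elt_inv in HG as [HAB HG].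
  constructor; try assumption.
  - apply incl_cons; [apply (proj2 (closed_imp _ U_closed _ _ HAB)) | exact HG].
  - refine (valid_weaken _ _ _ _ _ _ Hv); [apply incl_tl|]; apply incl_refl.
  - eapply hintikka_ImpL_left, HK.
Qed.

Lemma search_inv_ImpL_right l1 l2 A B D L Rt Rf :
  search_inv (l1 ++ Imp A B :: l2) D L Rt Rf -> search_inv (l1 ++ l2) (A :: D) L (A :: Rt) Rf.
Proof.
  intros [HG HD Hnd HRf Hv HK]; pose proof HG as [HAB HG']%incl_elt_inv.
  constructor; try assumption.
  - apply incl_cons; [apply (proj1 (closed_imp _ U_closed _ _ HAB)) | exact HD].
  - refine (valid_weaken _ _ _ _ _ _ Hv); [|apply incl_tl]; apply incl_refl.
  - eapply hintikka_ImpL_right, HK.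
Qed.

Lemma search_inv_ImpR l1 l2 A B G L Rt Rf :
  search_inv G (l1 ++ Imp A B :: l2) L Rt Rf ->
  search_inv (A :: G) (B :: l1 ++ l2) (A :: L) (B :: Rt) Rf.
Proof.
  intros [HG HD Hnd HRf Hv HK]; apply incl_elt_inv in HD as [HAB HD].
  destruct (closed_imp _ U_closed _ _ HAB) as [HA HB].
  constructor; try assumption; try (apply incl_cons; assumption).
  - refine (valid_weaken _ _ _ _ _ _ Hv); apply incl_tl, incl_refl.
  - apply hintikka_ImpR, HK.
Qed.

Lemma search_inv_refl B G D L Rt Rf :
  search_inv G D L Rt Rf -> In (Box B) G -> ~ In B Rf ->
  search_inv (B :: G) D (B :: L) Rt (B :: Rf).
Proof.
  intros [HG HD Hnd HRf Hv HK] HBG HBRf.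
  pose proof (closed_box _ U_closed _ (HG _ HBG)) as HB.
  constructor; try assumption; try (apply incl_cons; assumption).
  - apply NoDup_cons; assumption.
  - refine (valid_weaken _ _ _ _ _ _ Hv); [apply incl_tl|]; apply incl_refl.
  - apply hintikka_refl, HK.
Qed.

Lemma search_inv_BoxR l1 l2 A G L Rt Rf :
  search_inv G (l1 ++ Box A :: l2) L Rt Rf -> search_inv G (A :: l1 ++ l2) L (A :: Rt) Rf.
Proof.
  intros [HG HD Hnd HRf Hv HK]; apply incl_elt_inv in HD as [HBA HD].
  constructor; try assumption.
  - apply incl_cons; [apply (closed_box _ U_closed _ HBA) | exact HD].
  - refine (valid_weaken _ _ _ _ _ _ Hv); [|apply incl_tl]; apply incl_refl.
  - apply hintikka_BoxR, HK.
Qed.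

Lemma search_inv_key P A :
  incl (map Box P) U -> In A U -> valid (map Box P, [A]) ->
  search_inv (map Box P) [A] (map Box P) [A] [].
Proof.
  intros HP HA Hv; constructor; try assumption.
  - apply incl_cons; [exact HA | apply incl_nil_l].
  - apply NoDup_nil.
  - apply incl_nil_l.
  - apply hintikka_start.
Qed.

Lemma searchable_ImpL KH l1 l2 A B D L Rt Rf :
  searchable_below KH Rf (l1 ++ Imp A B :: l2) D ->
  search_inv (l1 ++ Imp A B :: l2) D L Rt Rf -> searchable KH (l1 ++ Imp A B :: l2) D.
Proof.
  intros IH Hs anc p b Hh.
  apply (has_ctree_binary _ _ _ _ ImpL (B :: l1 ++ l2, D) (l1 ++ l2, A :: D)); [reflexivity| | |].
  - exists (l1 ++ l2), D, A, B.
    split; [split; [symmetry; apply Permutation_middle | reflexivity]|].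
    split; split; reflexivity.
  - apply (IH KH _ _ (B :: L) Rt Rf); [apply search_lt_size; size_lia | |].
    + eapply search_inv_ImpL_left, Hs.
    + apply history_ok_child, Hh.
  - apply (IH KH _ _ L (A :: Rt) Rf); [apply search_lt_size; size_lia | |].
    + eapply search_inv_ImpL_right, Hs.
    + apply history_ok_child, Hh.
Qed.

Lemma searchable_ImpR KH l1 l2 A B G L Rt Rf :
  searchable_below KH Rf G (l1 ++ Imp A B :: l2) ->
  search_inv G (l1 ++ Imp A B :: l2) L Rt Rf -> searchable KH G (l1 ++ Imp A B :: l2).
Proof.
  intros IH Hs anc p b Hh.
  apply (has_ctree_unary _ _ _ _ ImpR (A :: G, B :: l1 ++ l2)); [reflexivity| |].
  - exists G, (l1 ++ l2), A, B.
    split; [split; [reflexivity | symmetry; apply Permutation_middle]|]; split; reflexivity.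
  - apply (IH KH _ _ (A :: L) (B :: Rt) Rf); [apply search_lt_size; size_lia | |].
    + apply search_inv_ImpR, Hs.
    + apply history_ok_child, Hh.
Qed.

Lemma searchable_refl KH B G D L Rt Rf :
  searchable_below KH Rf G D -> search_inv G D L Rt Rf -> In (Box B) G -> ~ In B Rf ->
  searchable KH G D.
Proof.
  intros IH Hs HBG HBRf anc p b Hh.
  pose proof (search_inv_refl _ _ _ _ _ _ Hs HBG HBRf) as Hs'.
  apply (has_ctree_unary _ _ _ _ Refl (B :: G, D)); [reflexivity| |].
  - apply in_split in HBG as (g1 & g2 & ->); exists (g1 ++ g2), D, B.
    split; split; try reflexivity; [|apply perm_skip]; symmetry; apply Permutation_middle.
  - apply (IH KH _ _ (B :: L) Rt (B :: Rf)); [|exact Hs' | apply history_ok_child, Hh].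
    apply right_slex, left_slex.
    pose proof (NoDup_incl_length (si_refl_nodup _ _ _ _ _ Hs') (si_refl _ _ _ _ _ Hs')).
    simpl in *; lia.
Qed.

Lemma has_ctree_key_premise KH Rf G D anc p P A :
  searchable_below KH Rf G D -> history_ok KH anc p (G, D) ->
  In (P, A) keys -> incl (map Box P) U -> In A U -> valid (map Box P, [A]) ->
  has_ctree (((G, D), p) :: anc) (p ++ [1]) true (map Box P, [A]).
Proof.
  intros IH Hh Hkey HP HA Hv.
  destruct (in_dec key_eq_dec (P, A) (map fst KH)) as [Hold|Hnew].
  - apply in_map_iff in Hold as ([k q] & Ek & Hkq); simpl in Ek; subst k.
    apply (has_ctree_backlink _ _ _ q).
    destruct (Hh _ _ Hkq) as [Hanc|[-> E]]; [right; exact Hanc | left; rewrite <- E; reflexivity].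
  - apply (IH (((P, A), p ++ [1]) :: KH) _ _ (map Box P) [A] []).
    + apply left_slex, unused_keys_open; assumption.
    + apply search_inv_key; assumption.
    + apply (history_ok_open _ _ _ _ (P, A)), Hh.
Qed.

Lemma searchable_BoxR KH G l1 l2 A L Rt Rf :
  searchable_below KH Rf G (l1 ++ Box A :: l2) -> search_inv G (l1 ++ Box A :: l2) L Rt Rf ->
  valid (map Box (boxed_part G), [A]) -> searchable KH G (l1 ++ Box A :: l2).
Proof.
  intros IH Hs Hv anc p b Hh.
  destruct (boxed_part_split G) as [R HR].
  pose proof (si_right _ _ _ _ _ Hs) as [HBA _]%incl_elt_inv.
  apply (has_ctree_binary _ _ _ _ BoxR (G, A :: l1 ++ l2) (map Box (boxed_part G), [A]));
    [reflexivity| | |].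
  - exists R, (l1 ++ l2), (boxed_part G), A.
    split; [split; [exact HR | symmetry; apply Permutation_middle]|].
    split; split; [exact HR | reflexivity | reflexivity | reflexivity].
  - apply (IH KH _ _ L (A :: Rt) Rf); [apply search_lt_size; size_lia | |].
    + apply search_inv_BoxR, Hs.
    + apply history_ok_child, Hh.
  - apply (has_ctree_key_premise KH Rf); auto.
    + apply in_prod; [apply filter_in_sublists | apply (closed_box _ U_closed _ HBA)].
    + intros f Hf; apply in_map_iff in Hf as (B & <- & HB).
      apply (si_left _ _ _ _ _ Hs), in_boxed_part, HB.
    + apply (closed_box _ U_closed _ HBA).
Qed.

Lemma searchable_step KH G D L Rt Rf :
  searchable_below KH Rf G D -> search_inv G D L Rt Rf -> searchable KH G D.
Proof.
  intros IH Hs.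
  destruct (classic (exists A B, In (Imp A B) G)) as [(A & B & HAB)|HnIL].
  { apply in_split in HAB as (l1 & l2 & ->); eapply searchable_ImpL; eauto. }
  destruct (classic (exists A B, In (Imp A B) D)) as [(A & B & HAB)|HnIR].
  { apply in_split in HAB as (l1 & l2 & ->); eapply searchable_ImpR; eauto. }
  destruct (classic (exists B, In (Box B) G /\ ~ In B Rf)) as [(B & HBG & HBRf)|Hnrefl].
  { eapply searchable_refl; eauto. }
  destruct (classic (initial (G, D))) as [Hini|Hnini].
  { intros anc p b _; apply has_ctree_initial, Hini. }
  destruct (classic (exists A, In (Box A) D /\ valid (map Box (boxed_part G), [A])))
    as [(A & HA & Hv)|Hnbox].
  { apply in_split in HA as (l1 & l2 & ->); eapply searchable_BoxR; eauto. }
  exfalso; refine (saturated_not_valid G D L Rt Rf (boxed_part G)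
                     (si_hintikka _ _ _ _ _ Hs) _ _ _ (si_valid _ _ _ _ _ Hs)).
  - constructor; [intros A B HAB; apply HnIL; eauto | intros A B HAB; apply HnIR; eauto | |].
    + intros B HBG; apply NNPP; intros HBRf; apply Hnrefl; eauto.
    + exact Hnini.
  - intros A HAG; apply in_boxed_part; split; [|exact HAG].
    apply (closed_box _ U_closed), (si_left _ _ _ _ _ Hs), HAG.
  - intros A HAD Hv; apply Hnbox; eauto.
Qed.

Lemma search_inv_searchable KH G D L Rt Rf : search_inv G D L Rt Rf -> searchable KH G D.
Proof.
  remember (measure KH Rf G D) as m eqn:Em; revert KH G D L Rt Rf Em.
  induction m as [m IH] using (well_founded_induction search_lt_wf).
  intros KH G D L Rt Rf -> Hs; apply (searchable_step _ _ _ L Rt Rf); [|exact Hs].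
  intros KH' G' D' L' Rt' Rf' Hlt Hs'; exact (IH _ Hlt _ _ _ _ _ _ eq_refl Hs').
Qed.

End Search.

Theorem valid_has_cyclic_proof G D : valid (G, D) -> has_cyclic_proof (G, D).
Proof.
  intros Hv.
  assert (Hs : search_inv (closure (G ++ D)) G D G D []).
  { constructor; try assumption.
    - intros f Hf; apply incl_closure, in_app_iff; left; exact Hf.
    - intros f Hf; apply incl_closure, in_app_iff; right; exact Hf.
    - apply NoDup_nil.
    - apply incl_nil_l.
    - apply hintikka_start. }
  destruct (search_inv_searchable _ (closure_closed _) (NoDup_nodup _ _) [] _ _ _ _ _ Hs
              [] [] false) as (T & HT & <-); [intros k q []|].
  apply ctree_cyclic_proof, HT.
Qed.

Theorem theorem8p5 (G D : list fml) :
  provable (G, D) -> has_cyclic_proof (G, D).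
Proof.
  intros [t Ht]; apply valid_has_cyclic_proof, (inf_proof_sound _ _ Ht).
Qed.
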